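(* Let $N\ge2$ and $\mathcal H_S=\mathbb C^N$. (a) Let $\mathcal E:\mathcal L(\mathcal K)\to\mathcal L(\mathcal R)$ be a channel between finite-dimensional Hilbert spaces that is not constrained by the third law. Then for every state $\sigma$ on $\mathcal H_S$ there exist the following: - some $D\in\mathbb N$; - a channel $\Phi_1:\mathcal L(\mathcal H_S)\to\mathcal L(\mathcal H_S\otimes\mathcal K^{\otimes D})$ that is constrained by the third law; - a channel $\Phi_2:\mathcal L(\mathcal H_S\otimes\mathcal R^{\otimes D})\to\mathcal L(\mathcal H_S)$ that is constrained by the third law. These satisfy $\Phi_2\circ(\mathrm{id}_{\mathcal H_S}\otimes\mathcal E^{\otimes D})\circ\Phi_1(\rho)=\sigma$ for every state $\rho$ on $\mathcal H_S$. (b) Conversely, if a channel $\Psi:\mathcal L(\mathcal H_S)\to\mathcal L(\mathcal H_S)$ is a finite composition of channels that are each constrained by the third law, then $\Psi$ maps every full-rank state to a full-rank state. In particular, no such $\Psi$ maps every state to a fixed pure state.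
   Context: All Hilbert spaces are finite-dimensional and complex. A state is a positive operator of unit trace; it is full-rank if it is positive definite. A channel $\Phi:\mathcal L(\mathcal H)\to\mathcal L(\mathcal K)$ is a completely positive trace-preserving linear map. It is constrained by the third law if $\Phi(\rho)$ is a full-rank state on $\mathcal K$ for every full-rank state $\rho$ on $\mathcal H$. *)

From HB Require Import structures.
From mathcomp Require Import all_boot all_order all_algebra.
From mathcomp Require Import mxtens.
Set Implicit Arguments. Unset Strict Implicit. Unset Printing Implicit Defensive.
Import Order.TTheory GRing.Theory Num.Theory.
Local Open Scope ring_scope.

Section Quantum.
Variable C : numClosedFieldType.

Definition adjmx m n (A : 'M[C]_(m, n)) : 'M[C]_(n, m) := map_mx Num.conj (A^T).

Definition psdmx n (A : 'M[C]_n) : Prop :=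
  forall x : 'cV[C]_n, 0 <= (adjmx x *m A *m x) 0 0.

Definition pdmx n (A : 'M[C]_n) : Prop :=
  forall x : 'cV[C]_n, x != 0 -> 0 < (adjmx x *m A *m x) 0 0.

Definition is_state n (rho : 'M[C]_n) : Prop := psdmx rho /\ \tr rho = 1.

Definition is_fullrank_state n (rho : 'M[C]_n) : Prop := is_state rho /\ pdmx rho.

Definition is_pure_state n (rho : 'M[C]_n) : Prop := is_state rho /\ \rank rho = 1%N.

(* tensor product of two linear maps on operators, L(C^m) (x) L(C^p) -> L(C^n) (x) L(C^q),
   defined on matrix units and extended linearly; tensor factors are indexed by
   mxtens_index (Kronecker convention of tensmx). *)
Definition tensmap m n p q (Phi : 'M[C]_m -> 'M[C]_n) (Psi : 'M[C]_p -> 'M[C]_q)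
    (X : 'M[C]_(m * p)) : 'M[C]_(n * q) :=
  \sum_(i < m) \sum_(j < m) \sum_(k < p) \sum_(l < p)
     X (mxtens_index (i, k)) (mxtens_index (j, l)) *:
       (Phi (delta_mx i j) *t Psi (delta_mx k l)).

Definition linmap m n (Phi : 'M[C]_m -> 'M[C]_n) : Prop :=
  forall (a : C) (X Y : 'M[C]_m), Phi (a *: X + Y) = a *: Phi X + Phi Y.

Definition compl_pos m n (Phi : 'M[C]_m -> 'M[C]_n) : Prop :=
  forall (a : nat) (X : 'M[C]_(a * m)), psdmx X -> psdmx (tensmap (@id 'M[C]_a) Phi X).

Definition trace_pres m n (Phi : 'M[C]_m -> 'M[C]_n) : Prop :=
  forall X : 'M[C]_m, \tr (Phi X) = \tr X.

Definition channel m n (Phi : 'M[C]_m -> 'M[C]_n) : Prop :=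
  [/\ linmap Phi, trace_pres Phi & compl_pos Phi].

Definition third_law m n (Phi : 'M[C]_m -> 'M[C]_n) : Prop :=
  forall rho : 'M[C]_m, is_fullrank_state rho -> is_fullrank_state (Phi rho).

Fixpoint powdim (k D : nat) : nat :=
  match D with 0 => 1%N | D'.+1 => (powdim k D' * k)%N end.

Fixpoint chanpow k r (E : 'M[C]_k -> 'M[C]_r) (D : nat) :
    'M[C]_(powdim k D) -> 'M[C]_(powdim r D) :=
  match D return 'M[C]_(powdim k D) -> 'M[C]_(powdim r D) with
  | 0 => id
  | D'.+1 => tensmap (@chanpow k r E D') E
  end.

Inductive third_law_composition : forall m n, ('M[C]_m -> 'M[C]_n) -> Prop :=
| tlc_one m n (Phi : 'M[C]_m -> 'M[C]_n) :
    channel Phi -> third_law Phi -> third_law_composition Phi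
| tlc_step m p n (Psi : 'M[C]_m -> 'M[C]_p) (Phi : 'M[C]_p -> 'M[C]_n) :
    third_law_composition Psi -> channel Phi -> third_law Phi ->
    third_law_composition (Phi \o Psi).

End Quantum.
Arguments chanpow {C k r} E D _.

(* (a) As E is not constrained by the third law, it maps some
   full-rank state rho0 to a state E rho0 with a unit null vector z.  Let Phi1
   attach the full-rank ancilla rho0, and let Phi2 perform the measurement
   {1 (x) |z><z|, 1 - 1 (x) |z><z|}, preparing a fixed full-rank state tau on the
   first outcome and sigma on the second.  On a full-rank input the first
   outcome has positive probability, so Phi2 obeys the third law; after E it
   never occurs, so the composite outputs sigma.  (b) Third-law channels
   compose, and a pure state has rank 1 < N whereas a full-rank state has
   rank N.

   Positivity is handled with Gram kernels H u v = sum_t (y t u)^* (y t v):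
   pairing a positive matrix with a Gram kernel gives a nonnegative number, and
   Gram kernels are closed under sums, entrywise products, reindexing and
   transport along a positive sesquilinear form. *)

From mathcomp Require Import all_boot all_order all_algebra.
From mathcomp Require Import reals complex.
From mathcomp Require Import mxtens ring sesquilinear spectral.
From Stdlib Require Import Classical.
Import Order.TTheory GRing.Theory Num.Theory.
Local Open Scope ring_scope.

Section ThirdLaw.
Set Implicit Arguments. Unset Strict Implicit. Unset Printing Implicit Defensive.
Variable C : numClosedFieldType.

Lemma sum_mxtens_index m n (F : 'I_(m * n) -> C) :
  \sum_e F e = \sum_i \sum_j F (mxtens_index (i, j)).
Proof.
rewrite pair_big (reindex (@mxtens_index m n)) /=; first by apply: eq_bigr => -[].
by exists (@mxtens_unindex m n) => e _; [exact: mxtens_indexK | exact: mxtens_unindexK].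
Qed.

Lemma mxtens_index_eq m n (i j : 'I_m) (s t : 'I_n) :
  (mxtens_index (i, s) == mxtens_index (j, t)) = (i == j) && (s == t).
Proof. by rewrite (can_eq (@mxtens_indexK m n)) xpair_eqE. Qed.

Lemma sum_pointmass2 n (k l : 'I_n) (F : 'I_n -> 'I_n -> C) :
  \sum_u \sum_v ((u == k) && (v == l))%:R * F u v = F k l.
Proof.
rewrite (bigD1 k) //= [X in _ + X]big1 => [|u uk]; last first.
  by rewrite big1 // => v _; rewrite (negbTE uk) mul0r.
rewrite addr0 (bigD1 l) //= [X in _ + X]big1 => [|v vl]; last by rewrite (negbTE vl) andbF mul0r.
by rewrite !eqxx mul1r addr0.
Qed.

Lemma cV_neq0 n (x : 'cV[C]_n) : x != 0 -> exists p, x p 0 != 0.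
Proof.
move=> x0; apply/existsP; apply: contraNT x0 => /existsPn x0.
by apply/eqP/matrixP => p j; rewrite ord1 mxE; apply/eqP/negPn/x0.
Qed.

Lemma norm2_gt0 n (x : 'I_n -> C) p : x p != 0 -> 0 < \sum_q (x q)^* * x q.
Proof.
move=> xp; rewrite (bigD1 p) //= ltr_wpDr ?sumr_ge0 // => [q _|];
  by rewrite mulrC ?mul_conjC_ge0 ?mul_conjC_gt0.
Qed.

(** * Pairing a matrix with a kernel *)

Definition pairing n (X : 'M[C]_n) (H : 'I_n -> 'I_n -> C) : C :=
  \sum_u \sum_v X u v * H u v.

Lemma eq_pairing n (X : 'M[C]_n) H H' : (forall u v, H u v = H' u v) ->
  pairing X H = pairing X H'.
Proof. by move=> eH; apply: eq_bigr => u _; apply: eq_bigr => v _; rewrite eH. Qed.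

Lemma pairingD n (X Y : 'M[C]_n) H : pairing (X + Y) H = pairing X H + pairing Y H.
Proof.
rewrite -big_split; apply: eq_bigr => u _ /=.
by rewrite -big_split; apply: eq_bigr => v _ /=; rewrite mxE mulrDl.
Qed.

Lemma pairingZ n (c : C) (X : 'M[C]_n) H : pairing (c *: X) H = c * pairing X H.
Proof.
rewrite mulr_sumr; apply: eq_bigr => u _ /=.
by rewrite mulr_sumr; apply: eq_bigr => v _ /=; rewrite mxE mulrA.
Qed.

Lemma pairing_sum n I (r : seq I) (P : pred I) (F : I -> 'M[C]_n) H :
  pairing (\sum_(i <- r | P i) F i) H = \sum_(i <- r | P i) pairing (F i) H.
Proof.
apply: (big_morph (fun X => pairing X H)) => [X Y|]; first exact: pairingD.
by rewrite /pairing big1 // => u _; rewrite big1 // => v _; rewrite mxE mul0r.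
Qed.

Lemma pairing_sumr n (X : 'M[C]_n) I (r : seq I) (P : pred I) F :
  pairing X (fun u v => \sum_(i <- r | P i) F i u v) = \sum_(i <- r | P i) pairing X (F i).
Proof.
rewrite exchange_big; apply: eq_bigr => u _; rewrite exchange_big.
by apply: eq_bigr => v _; rewrite mulr_sumr.
Qed.

Lemma pairingDr n (X : 'M[C]_n) H H' :
  pairing X (fun u v => H u v + H' u v) = pairing X H + pairing X H'.
Proof.
rewrite -big_split; apply: eq_bigr => u _ /=.
by rewrite -big_split; apply: eq_bigr => v _ /=; rewrite mulrDr.
Qed.

Lemma pairingZr n (X : 'M[C]_n) (c : C) H :
  pairing X (fun u v => c * H u v) = c * pairing X H.
Proof.
rewrite mulr_sumr; apply: eq_bigr => u _ /=.
by rewrite mulr_sumr; apply: eq_bigr => v _ /=; rewrite mulrCA.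
Qed.

Lemma pairingBr n (X : 'M[C]_n) H H' :
  pairing X (fun u v => H u v - H' u v) = pairing X H - pairing X H'.
Proof.
rewrite -sumrB; apply: eq_bigr => u _ /=.
by rewrite -sumrB; apply: eq_bigr => v _ /=; rewrite mulrBr.
Qed.

Lemma pairing_delta_mx n (k l : 'I_n) H : pairing (delta_mx k l) H = H k l.
Proof.
rewrite -[RHS](sum_pointmass2 k l H).
by apply: eq_bigr => u _; apply: eq_bigr => v _; rewrite mxE.
Qed.

Lemma pairing_scalar n (c : C) H : pairing (c%:M : 'M[C]_n) H = c * \sum_u H u u.
Proof.
rewrite mulr_sumr; apply: eq_bigr => u _.
rewrite (bigD1 u) //= big1 ?addr0 => [|v vu]; last by rewrite !mxE eq_sym (negbTE vu) mul0r.
by rewrite !mxE eqxx mulr1n.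
Qed.

Lemma pairing1r n (X : 'M[C]_n) : pairing X (fun u v => (u == v)%:R) = \tr X.
Proof.
apply: eq_bigr => u _.
rewrite (bigD1 u) //= big1 ?addr0 => [|v vu]; last by rewrite eq_sym (negbTE vu) mulr0.
by rewrite eqxx mulr1.
Qed.

Lemma pairing_tensmx m n (A : 'M[C]_m) (B : 'M[C]_n) H :
  pairing (A *t B) H = pairing A (fun i j =>
    pairing B (fun s t => H (mxtens_index (i, s)) (mxtens_index (j, t)))).
Proof.
rewrite /pairing sum_mxtens_index; apply: eq_bigr => i _.
under eq_bigr => s _ do rewrite sum_mxtens_index.
rewrite exchange_big; apply: eq_bigr => j _ /=.
rewrite mulr_sumr; apply: eq_bigr => s _; rewrite mulr_sumr; apply: eq_bigr => t _.
by rewrite tensmxE mulrA [A i j * _]mulrC.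
Qed.

Definition sesq n (A : 'M[C]_n) (x y : 'I_n -> C) : C :=
  pairing A (fun u v => (x u)^* * y v).

Lemma sesq_colE n (A : 'M[C]_n) (x : 'cV_n) :
  (adjmx x *m A *m x) 0 0 = sesq A (fun p => x p 0) (fun q => x q 0).
Proof.
rewrite /sesq /pairing mxE exchange_big /=; apply: eq_bigr => q _.
rewrite mxE mulr_suml; apply: eq_bigr => p _.
by rewrite /adjmx !mxE mulrCA mulrA.
Qed.

Lemma eq_sesq n (A : 'M[C]_n) (x x' y y' : 'I_n -> C) :
  x =1 x' -> y =1 y' -> sesq A x y = sesq A x' y'.
Proof. by move=> ex ey; apply: eq_pairing => u v; rewrite ex ey. Qed.

Lemma sesq_col n (A : 'M[C]_n) (f : 'I_n -> C) :
  (adjmx (\col_p f p) *m A *m (\col_p f p)) 0 0 = sesq A f f.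
Proof. by rewrite sesq_colE; apply: eq_sesq => p; rewrite mxE. Qed.

Lemma sesqDl n (A : 'M[C]_n) x x' y :
  sesq A (fun p => x p + x' p) y = sesq A x y + sesq A x' y.
Proof. by rewrite -pairingDr; apply: eq_pairing => u v; rewrite rmorphD mulrDl. Qed.

Lemma sesqDr n (A : 'M[C]_n) x y y' :
  sesq A x (fun q => y q + y' q) = sesq A x y + sesq A x y'.
Proof. by rewrite -pairingDr; apply: eq_pairing => u v; rewrite mulrDr. Qed.

Lemma sesqZl n (A : 'M[C]_n) (c : C) x y : sesq A (fun p => c * x p) y = c^* * sesq A x y.
Proof. by rewrite -pairingZr; apply: eq_pairing => u v; rewrite rmorphM mulrA. Qed.

Lemma sesqZr n (A : 'M[C]_n) (c : C) x y : sesq A x (fun q => c * y q) = c * sesq A x y.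
Proof. by rewrite -pairingZr; apply: eq_pairing => u v; rewrite mulrCA. Qed.

Lemma sesq_basis n (A : 'M[C]_n) i j :
  sesq A (fun p => (p == i)%:R) (fun q => (q == j)%:R) = A i j.
Proof.
rewrite -[RHS](sum_pointmass2 i j A); apply: eq_bigr => u _; apply: eq_bigr => v _.
by rewrite conjC_nat -natrM mulnb mulrC.
Qed.

Definition slice m n (x : 'I_(m * n) -> C) (i : 'I_m) : 'I_n -> C :=
  fun s => x (mxtens_index (i, s)).

Lemma sesq_tens m n (A : 'M[C]_m) (B : 'M[C]_n) x y :
  sesq (A *t B) x y = pairing A (fun i j => sesq B (slice x i) (slice y j)).
Proof. exact: pairing_tensmx. Qed.

Lemma psdmx_sesq n (A : 'M[C]_n) : psdmx A <-> forall x, 0 <= sesq A x x.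
Proof.
split=> [pA x | pA x]; last by rewrite sesq_colE.
by have := pA (\col_p x p); rewrite sesq_col.
Qed.

Lemma pdmx_sesq n (A : 'M[C]_n) :
  pdmx A <-> forall x p, x p != 0 -> 0 < sesq A x x.
Proof.
split=> [pA x p xp | pA x /cV_neq0 [p xp]]; last by rewrite sesq_colE; apply: pA xp.
rewrite -sesq_col; apply: pA; apply: contra xp => /eqP/matrixP/(_ p 0).
by rewrite !mxE => ->.
Qed.

Lemma pdmx_psd n (A : 'M[C]_n) : pdmx A -> psdmx A.
Proof.
move=> /pdmx_sesq pA; apply/psdmx_sesq => x.
have [/existsP [p xp] | /existsPn x0] := boolP [exists p, x p != 0]; first exact/ltW/pA/xp.
rewrite /sesq /pairing big1 // => u _; rewrite big1 // => v _.
by rewrite (eqP (negPn (x0 u))) conjC0 mul0r mulr0.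
Qed.

Lemma pdmx_scalar n (c : C) : 0 < c -> pdmx (c%:M : 'M[C]_n).
Proof.
move=> c0; apply/pdmx_sesq => x p xp.
by rewrite /sesq pairing_scalar mulr_gt0 // (norm2_gt0 xp).
Qed.

Lemma psdmx_hermsym n (A : 'M[C]_n) : psdmx A -> A \is hermsymmx.
Proof.
move=> /psdmx_sesq pA; apply/is_hermitianmxP; rewrite expr0 scale1r.
apply/matrixP => i j; rewrite !mxE.
pose e (k p : 'I_n) : C := (p == k)%:R.
pose q (c : C) := sesq A (fun p => e i p + c * e j p) (fun p => e i p + c * e j p).
have qE c : q c = A i i + c * A i j + c^* * A j i + c^* * c * A j j.
  by rewrite /q sesqDl !sesqDr !sesqZl !sesqZr !sesq_basis addrA mulrA.
have real c : (q c)^* = q c by exact: geC0_conj (pA _).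
have diag_real k : (A k k)^* = A k k by rewrite -sesq_basis geC0_conj.
(* [q 1] and [q 'i] being real pin down the real and imaginary parts of [A j i] *)
have : (A j i - (A i j)^*) * 2 = (q 1 - (q 1)^*) + 'i * (q 'i - (q 'i)^*)
    - (1 + 'i * 'i) * (A i j - A j i + (A i j)^* - (A j i)^*).
  by rewrite !qE !rmorphD !rmorphM /= !conjCK conjCi conjC1 !diag_real; ring.
rewrite (real 1) (real 'i) !subrr mulr0 addr0 -expr2 sqrCi addrN mul0r subr0.
by move/eqP; rewrite mulf_eq0 pnatr_eq0 orbF subr_eq0 => /eqP ->; rewrite conjCK.
Qed.

(** * Gram kernels *)

Definition gram (I : finType) (H : I -> I -> C) : Prop :=
  exists (T : finType) (y : T -> I -> C), forall u v, H u v = \sum_t (y t u)^* * y t v.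

Lemma eq_gram (I : finType) (H H' : I -> I -> C) :
  (forall u v, H u v = H' u v) -> gram H -> gram H'.
Proof. by move=> eH [T [y hy]]; exists T, y => u v; rewrite -eH hy. Qed.

Lemma gram_comp (I J : finType) (f : J -> I) (H : I -> I -> C) :
  gram H -> gram (fun u v => H (f u) (f v)).
Proof. by move=> [T [y hy]]; exists T, (fun t u => y t (f u)) => u v; rewrite hy. Qed.

Lemma gramD (I : finType) (H1 H2 : I -> I -> C) :
  gram H1 -> gram H2 -> gram (fun u v => H1 u v + H2 u v).
Proof.
move=> [T1 [y1 h1]] [T2 [y2 h2]].
exists (T1 + T2)%type, (fun t u => match t with inl t => y1 t u | inr t => y2 t u end).
by move=> u v; rewrite h1 h2 big_sumType.
Qed.

Lemma gramM (I : finType) (H1 H2 : I -> I -> C) :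
  gram H1 -> gram H2 -> gram (fun u v => H1 u v * H2 u v).
Proof.
move=> [T1 [y1 h1]] [T2 [y2 h2]].
exists (T1 * T2)%type, (fun t u => y1 t.1 u * y2 t.2 u) => u v.
rewrite h1 h2 mulr_suml -(pair_bigA _ (fun t1 t2 => (y1 t1 u * y2 t2 u)^* * (y1 t1 v * y2 t2 v))).
apply: eq_bigr => t1 _; rewrite mulr_sumr; apply: eq_bigr => t2 _.
by rewrite rmorphM /=; ring.
Qed.

Lemma gram_delta (I : finType) : gram (fun u v : I => (u == v)%:R).
Proof.
exists I, (fun t u => (t == u)%:R) => u v.
rewrite (bigD1 u) //= big1 => [|t tu]; last by rewrite (negbTE tu) conjC0 mul0r.
by rewrite eqxx conjC1 mul1r addr0 eq_sym.
Qed.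

Lemma gram_rank1 (I : finType) (z : I -> C) : gram (fun u v => (z u)^* * z v).
Proof. by exists 'I_1, (fun _ u => z u) => u v; rewrite big_ord1. Qed.

Lemma gram_delta_subr_rank1 n (z : 'I_n -> C) : \sum_s (z s)^* * z s = 1 ->
  gram (fun u v => (u == v)%:R - (z u)^* * z v).
Proof.
move=> z1; exists 'I_n, (fun t u => (t == u)%:R - (z t)^* * z u) => u v.
have sum_pointmass (F : 'I_n -> C) a : \sum_t (t == a)%:R * F t = F a.
  by rewrite (bigD1 a) //= big1 ?addr0 ?eqxx ?mul1r // => t ta; rewrite (negbTE ta) mul0r.
have z1' : \sum_t z t * (z t)^* = 1 by rewrite -z1; apply: eq_bigr => t _; rewrite mulrC.
transitivity (\sum_t ((t == u)%:R * (t == v)%:R - ((t == u)%:R * (z t)^*) * z v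
   - ((t == v)%:R * z t) * (z u)^* + (z t * (z t)^*) * ((z u)^* * z v))).
  rewrite big_split /= !sumrB -!mulr_suml !sum_pointmass z1' mul1r eq_sym; ring.
by apply: eq_bigr => t _; rewrite rmorphB rmorphM /= conjCK conjC_nat; ring.
Qed.

Lemma gram_sesq n (B : 'M[C]_n) (I : finType) (x : I -> 'I_n -> C) :
  gram (fun s t => B s t) -> gram (fun u v => sesq B (x u) (x v)).
Proof.
move=> [T [y hy]]; exists T, (fun t u => \sum_s y t s * x u s) => u v.
rewrite /sesq /pairing.
under eq_bigr => s _ do under eq_bigr => s' _ do rewrite hy mulr_suml.
under eq_bigr => s _ do rewrite exchange_big.
rewrite exchange_big; apply: eq_bigr => t _ /=.
rewrite rmorph_sum mulr_suml; apply: eq_bigr => s _ /=.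
rewrite mulr_sumr; apply: eq_bigr => s' _.
by rewrite rmorphM /=; ring.
Qed.

Lemma psdmx_gram n (A : 'M[C]_n) : psdmx A -> gram (fun s t => A s t).
Proof.
move=> pA; have /hermitian_normalmx/orthomx_spectralP hA := psdmx_hermsym pA.
set P := spectralmx A in hA; set d := spectral_diag A in hA.
have uP : P \is unitarymx := spectral_unitarymx A.
rewrite invmx_unitary // in hA.
(* the eigenvalue [d 0 k] is the value of the form on the [k]-th eigenvector *)
have d_ge0 k : 0 <= d 0 k.
  have : P *m A *m (P ^t*)%sesqui = diag_mx d.
    by rewrite hA !mulmxA (unitarymxP uP) mul1mx -mulmxA (unitarymxP uP) mulmx1.
  move/matrixP/(_ k k); rewrite [diag_mx d k k]mxE eqxx mulr1n => <-.
  suff -> : (P *m A *m (P ^t*)%sesqui) k k = sesq A (fun s => (P k s)^*) (fun s => (P k s)^*).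
    by move/psdmx_sesq: pA.
  rewrite /sesq /pairing mxE exchange_big; apply: eq_bigr => v _.
  by rewrite mxE mulr_suml; apply: eq_bigr => u _; rewrite !mxE conjCK; ring.
exists 'I_n, (fun k s => sqrtC (d 0 k) * P k s) => s t.
rewrite {1}hA mul_mx_diag !mxE; apply: eq_bigr => k _.
have sd_ge0 : 0 <= sqrtC (d 0 k) by rewrite sqrtC_ge0.
rewrite !mxE rmorphM /= (geC0_conj sd_ge0) mulrACA -expr2 sqrtCK; ring.
Qed.

Lemma pairing_ge0 n (X : 'M[C]_n) H : psdmx X -> gram H -> 0 <= pairing X H.
Proof.
move=> /psdmx_sesq pX [T [y hy]]; rewrite (eq_pairing _ hy) pairing_sumr.
by apply: sumr_ge0 => t _; apply: pX.
Qed.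

Lemma pairing_gt0 n (X : 'M[C]_n) H u0 :
  pdmx X -> gram H -> H u0 u0 != 0 -> 0 < pairing X H.
Proof.
move=> pX [T [y hy]] Hu0; rewrite (eq_pairing _ hy) pairing_sumr.
have [t0 yt0] : exists t, y t u0 != 0.
  apply/existsP; apply: contraNT Hu0 => /existsPn y0.
  by rewrite hy big1 // => t _; rewrite (eqP (negPn (y0 t))) mulr0.
rewrite (bigD1 t0) //= ltr_wpDr ?sumr_ge0 // => [t _|].
  by move/pdmx_psd/psdmx_sesq: pX; apply.
by move/pdmx_sesq: pX; apply; apply: yt0.
Qed.

Lemma psdmx_tens m n (A : 'M[C]_m) (B : 'M[C]_n) :
  psdmx A -> psdmx B -> psdmx (A *t B).
Proof.
move=> pA pB; apply/psdmx_sesq => x; rewrite sesq_tens.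
exact/(pairing_ge0 pA)/gram_sesq/psdmx_gram.
Qed.

Lemma pdmx_tens m n (A : 'M[C]_m) (B : 'M[C]_n) :
  pdmx A -> pdmx B -> pdmx (A *t B).
Proof.
move=> pA pB; apply/pdmx_sesq => x e; case: (mxtens_indexP e) => i s xis.
rewrite sesq_tens; apply: (pairing_gt0 (u0 := i) pA).
  exact/gram_sesq/psdmx_gram/pdmx_psd.
by rewrite gt_eqF //; move/pdmx_sesq: pB; apply; apply: xis.
Qed.

Lemma tensmxDl m n p q (A A' : 'M[C]_(m, n)) (B : 'M[C]_(p, q)) :
  (A + A') *t B = A *t B + A' *t B.
Proof. by apply/matrixP => i j; rewrite !mxE mulrDl. Qed.

Lemma tensmxDr m n p q (A : 'M[C]_(m, n)) (B B' : 'M[C]_(p, q)) :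
  A *t (B + B') = A *t B + A *t B'.
Proof. by apply/matrixP => i j; rewrite !mxE mulrDr. Qed.

Lemma tensmxZl m n p q (a : C) (A : 'M[C]_(m, n)) (B : 'M[C]_(p, q)) :
  (a *: A) *t B = a *: (A *t B).
Proof. by apply/matrixP => i j; rewrite !mxE mulrA. Qed.

Lemma tensmxZr m n p q (b : C) (A : 'M[C]_(m, n)) (B : 'M[C]_(p, q)) :
  A *t (b *: B) = b *: (A *t B).
Proof. by apply/matrixP => i j; rewrite !mxE mulrCA. Qed.

Lemma tensmx_suml m n p q I (r : seq I) (P : pred I) (F : I -> 'M[C]_(m, n))
    (B : 'M[C]_(p, q)) :
  (\sum_(i <- r | P i) F i) *t B = \sum_(i <- r | P i) F i *t B.
Proof.
by apply: (big_morph (fun A => A *t B)) => [A A'|]; [exact: tensmxDl | exact: tens0mx].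
Qed.

Lemma tensmx_sumr m n p q I (r : seq I) (P : pred I) (A : 'M[C]_(m, n))
    (F : I -> 'M[C]_(p, q)) :
  A *t (\sum_(i <- r | P i) F i) = \sum_(i <- r | P i) A *t F i.
Proof.
by apply: (big_morph (fun B => A *t B)) => [B B'|]; [exact: tensmxDr | exact: tensmx0].
Qed.

Section LinearMap.
Variables (m n : nat) (F : 'M[C]_m -> 'M[C]_n).
Hypothesis linF : linmap F.

Lemma linmapD X Y : F (X + Y) = F X + F Y.
Proof. by have := linF 1 X Y; rewrite !scale1r. Qed.

Lemma linmap0 : F 0 = 0.
Proof.
have h := linmapD 0 0; rewrite addr0 in h.
by apply: (addrI (F 0)); rewrite addr0 -h.
Qed.

Lemma linmapZ c X : F (c *: X) = c *: F X.
Proof. by have := linF c X 0; rewrite !addr0 linmap0 addr0. Qed.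

Lemma linmap_sum I (r : seq I) (P : pred I) G :
  F (\sum_(i <- r | P i) G i) = \sum_(i <- r | P i) F (G i).
Proof. exact: (big_morph F linmapD linmap0). Qed.

Lemma linmap_delta_expand A : F A = \sum_i \sum_j A i j *: F (delta_mx i j).
Proof.
rewrite {1}(matrix_sum_delta A) linmap_sum; apply: eq_bigr => i _.
by rewrite linmap_sum; apply: eq_bigr => j _; rewrite linmapZ.
Qed.

Lemma tensmap_id_tens a (A : 'M[C]_a) (B : 'M[C]_m) :
  tensmap (@id 'M[C]_a) F (A *t B) = A *t F B.
Proof.
rewrite /tensmap [in RHS](matrix_sum_delta A) tensmx_suml; apply: eq_bigr => i _.
rewrite tensmx_suml; apply: eq_bigr => j _.
rewrite linmap_delta_expand tensmx_sumr; apply: eq_bigr => k _.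
rewrite tensmx_sumr; apply: eq_bigr => l _.
by rewrite tensmxE tensmxZl tensmxZr scalerA.
Qed.

End LinearMap.

Lemma linmap_tensmap a m n (Phi : 'M[C]_m -> 'M[C]_n) :
  linmap (tensmap (@id 'M[C]_a) Phi).
Proof.
move=> c X Y; rewrite /tensmap scaler_sumr -big_split; apply: eq_bigr => i _ /=.
rewrite scaler_sumr -big_split; apply: eq_bigr => j _ /=.
rewrite scaler_sumr -big_split; apply: eq_bigr => k _ /=.
rewrite scaler_sumr -big_split; apply: eq_bigr => l _ /=.
by rewrite !mxE scalerA scalerDl.
Qed.

Lemma sesq_tensmap a m n (Phi : 'M[C]_m -> 'M[C]_n) (X : 'M[C]_(a * m)) x y :
  sesq (tensmap (@id 'M[C]_a) Phi X) x y =
  pairing X (fun e f => sesq (Phi (delta_mx (mxtens_unindex e).2 (mxtens_unindex f).2))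
                            (slice x (mxtens_unindex e).1) (slice y (mxtens_unindex f).1)).
Proof.
rewrite /sesq /tensmap pairing_sum {2}/pairing sum_mxtens_index; apply: eq_bigr => i _.
under [RHS]eq_bigr => k _ do rewrite sum_mxtens_index.
rewrite [RHS]exchange_big pairing_sum; apply: eq_bigr => j _.
rewrite pairing_sum; apply: eq_bigr => k _; rewrite pairing_sum; apply: eq_bigr => l _.
by rewrite pairingZ pairing_tensmx pairing_delta_mx !mxtens_indexK.
Qed.

Lemma compl_pos_gram m n (Phi : 'M[C]_m -> 'M[C]_n) :
  (forall a (y : 'I_a -> 'I_n -> C),
     gram (fun u v : 'I_a * 'I_m => sesq (Phi (delta_mx u.2 v.2)) (y u.1) (y v.1))) ->
  compl_pos Phi.
Proof.
move=> gramPhi a X pX; apply/psdmx_sesq => x; rewrite sesq_tensmap.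
exact: (pairing_ge0 pX (gram_comp (@mxtens_unindex a m) (gramPhi a (slice x)))).
Qed.

Definition tenskernel m n (H1 : 'I_m -> 'I_m -> C) (H2 : 'I_n -> 'I_n -> C)
    (e f : 'I_(m * n)) : C :=
  H1 (mxtens_unindex e).1 (mxtens_unindex f).1 * H2 (mxtens_unindex e).2 (mxtens_unindex f).2.

Lemma gram_tenskernel m n (H1 : 'I_m -> 'I_m -> C) (H2 : 'I_n -> 'I_n -> C) :
  gram H1 -> gram H2 -> gram (tenskernel H1 H2).
Proof.
move=> g1 g2; apply: gramM.
  exact: (gram_comp (fun e => (mxtens_unindex e).1) g1).
exact: (gram_comp (fun e => (mxtens_unindex e).2) g2).
Qed.

Lemma tenskernel_delta m n (e f : 'I_(m * n)) :
  tenskernel (fun i j => (i == j)%:R) (fun s t => (s == t)%:R) e f = (e == f)%:R.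
Proof.
case: (mxtens_indexP e) => i s; case: (mxtens_indexP f) => j t.
by rewrite /tenskernel !mxtens_indexK mxtens_index_eq -natrM mulnb.
Qed.

Lemma pairing_tenskernel m n (A : 'M[C]_m) (B : 'M[C]_n) H1 H2 :
  pairing (A *t B) (tenskernel H1 H2) = pairing A H1 * pairing B H2.
Proof.
rewrite pairing_tensmx mulrC -pairingZr; apply: eq_pairing => i j.
rewrite mulrC -pairingZr; apply: eq_pairing => s t.
by rewrite /tenskernel !mxtens_indexK.
Qed.

Lemma mxtrace_tens m n (A : 'M[C]_m) (B : 'M[C]_n) : \tr (A *t B) = \tr A * \tr B.
Proof.
by rewrite -!pairing1r -pairing_tenskernel; apply: eq_pairing => e f; rewrite tenskernel_delta.
Qed.

Lemma mxtrace_delta n (k l : 'I_n) : \tr (delta_mx k l : 'M[C]_n) = (k == l)%:R.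
Proof. by rewrite -pairing1r pairing_delta_mx. Qed.

Lemma sesq_tens1 n (B : 'M[C]_n) x y :
  sesq ((1%:M : 'M[C]_1) *t B) x y = sesq B (slice x 0) (slice y 0).
Proof. by rewrite sesq_tens /sesq pairing_scalar big_ord1 mul1r. Qed.

Lemma psdmx_untens1 n (B : 'M[C]_n) : psdmx ((1%:M : 'M[C]_1) *t B) -> psdmx B.
Proof.
move=> /psdmx_sesq pB; apply/psdmx_sesq => x.
pose x1 (e : 'I_(1 * n)) := x (mxtens_unindex e).2.
have -> : sesq B x x = sesq B (slice x1 0) (slice x1 0).
  by apply: eq_sesq => s; rewrite /slice /x1 mxtens_indexK.
by rewrite -sesq_tens1.
Qed.

Lemma fullrank_state_tens m n (A : 'M[C]_m) (B : 'M[C]_n) :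
  is_fullrank_state A -> is_fullrank_state B -> is_fullrank_state (A *t B).
Proof.
move=> [[_ trA] pdA] [[_ trB] pdB]; have pdAB := pdmx_tens pdA pdB.
by split; first split; rewrite ?mxtrace_tens ?trA ?trB ?mulr1 //; apply: pdmx_psd.
Qed.

Lemma fullrank_state_maxmixed n : (0 < n)%N -> is_fullrank_state ((n%:R^-1)%:M : 'M[C]_n).
Proof.
move=> n_gt0; have pd : pdmx ((n%:R^-1)%:M : 'M[C]_n) by apply: pdmx_scalar; rewrite invr_gt0 ltr0n.
split; [split; [exact: pdmx_psd |] | exact: pd].
by rewrite mxtrace_scalar -[_ *+ n]mulr_natr mulVf // pnatr_eq0 -lt0n.
Qed.

Lemma channel_state m n (Phi : 'M[C]_m -> 'M[C]_n) rho :
  channel Phi -> is_state rho -> is_state (Phi rho).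
Proof.
move=> [linPhi trPhi cpPhi] [prho trho]; split; last by rewrite trPhi.
apply: psdmx_untens1; rewrite -tensmap_id_tens //; apply: cpPhi.
by apply: psdmx_tens prho; apply/pdmx_psd/pdmx_scalar/ltr01.
Qed.

Definition attach_state m k (B : 'M[C]_k) (Y : 'M[C]_m) : 'M[C]_(m * k) := Y *t B.

Lemma channel_attach_state m k (B : 'M[C]_k) :
  is_state B -> channel (@attach_state m k B).
Proof.
move=> [pB trB]; split.
- by move=> c X Y; rewrite /attach_state tensmxDl tensmxZl.
- by move=> Y; rewrite /attach_state mxtrace_tens trB mulr1.
apply: compl_pos_gram => a y.
apply: eq_gram (gram_sesq (fun u => slice (y u.1) u.2) (psdmx_gram pB)) => u v.
by rewrite /attach_state sesq_tens pairing_delta_mx.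
Qed.

Lemma third_law_attach_state m k (B : 'M[C]_k) :
  is_fullrank_state B -> third_law (@attach_state m k B).
Proof. by move=> frB Y frY; apply: fullrank_state_tens. Qed.

(** * Measure-and-prepare channels *)

Section MeasurePrepare.
Variables (n N : nat) (V : 'I_n -> 'I_n -> C) (sigma tau : 'M[C]_N).

(* [V] is the transpose of the effect [M] of the measurement [{1 - M, M}], so
   that [pairing Y V = \tr (M *m Y)]; outcome [1 - M] prepares [sigma] and
   outcome [M] prepares [tau]. *)
Definition measure_prepare (Y : 'M[C]_n) : 'M[C]_N :=
  (\tr Y - pairing Y V) *: sigma + pairing Y V *: tau.

Hypotheses (gramV : gram V) (gramV' : gram (fun u v => (u == v)%:R - V u v)).

Lemma channel_measure_prepare :
  is_state sigma -> is_state tau -> channel measure_prepare.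
Proof.
move=> [psigma trsigma] [ptau trtau]; split.
- move=> c X Y; rewrite /measure_prepare pairingD pairingZ mxtraceD mxtraceZ.
  by apply/matrixP => i j; rewrite !mxE; ring.
- by move=> Y; rewrite mxtraceD !mxtraceZ trsigma trtau !mulr1 subrK.
apply: compl_pos_gram => a y.
have gram_y A : psdmx A -> gram (fun u v : 'I_a * 'I_n => sesq A (y u.1) (y v.1)).
  by move=> pA; exact: (gram_comp fst (gram_sesq y (psdmx_gram pA))).
apply: eq_gram (gramD (gramM (gram_comp snd gramV') (gram_y _ psigma))
                      (gramM (gram_comp snd gramV) (gram_y _ ptau))) => u v.
by rewrite /measure_prepare /sesq pairingD !pairingZ mxtrace_delta pairing_delta_mx.
Qed.

Lemma third_law_measure_prepare u0 :
  V u0 u0 != 0 -> is_state sigma -> is_fullrank_state tau -> third_law measure_prepare.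
Proof.
move=> Vu0 ssigma [stau pdtau] Y [[pY trY] pdY].
have [_ trP _] := channel_measure_prepare ssigma stau.
have /psdmx_sesq qsigma := ssigma.1; have /psdmx_sesq qtau := stau.1.
have V_gt0 : 0 < pairing Y V := pairing_gt0 pdY gramV Vu0.
have V'_ge0 : 0 <= \tr Y - pairing Y V by rewrite -pairing1r -pairingBr pairing_ge0.
have sesq_mp x : sesq (measure_prepare Y) x x =
    (\tr Y - pairing Y V) * sesq sigma x x + pairing Y V * sesq tau x x.
  by rewrite /sesq pairingD !pairingZ.
split; first split.
- by apply/psdmx_sesq => x; rewrite sesq_mp addr_ge0 // mulr_ge0 // ?qsigma ?qtau // ltW.
- by rewrite trP.
apply/pdmx_sesq => x p xp; rewrite sesq_mp ltr_wpDl ?mulr_ge0 ?mulr_gt0 //.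
by move/pdmx_sesq: pdtau; apply; apply: xp.
Qed.

End MeasurePrepare.

Lemma psdmx_not_pdmx_null n (A : 'M[C]_n) : psdmx A -> ~ pdmx A ->
  exists2 z : 'I_n -> C, \sum_s (z s)^* * z s = 1 & sesq A z z = 0.
Proof.
move=> /psdmx_sesq pA npdA.
have [x [p [xp Ax]]] : exists x p, x p != 0 /\ sesq A x x = 0.
  apply: NNPP => none; apply/npdA/pdmx_sesq => x p xp.
  rewrite lt_def pA andbT; apply/eqP => Ax; apply: none.
  by exists x, p.
have x_gt0 := norm2_gt0 xp.
pose lam := (sqrtC (\sum_s (x s)^* * x s))^-1.
have lam_ge0 : 0 <= lam by rewrite invr_ge0 sqrtC_ge0 ltW.
exists (fun s => lam * x s); last by rewrite sesqZl sesqZr Ax !mulr0.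
transitivity (lam * lam * \sum_s (x s)^* * x s).
  by rewrite mulr_sumr; apply: eq_bigr => s _; rewrite rmorphM /= (geC0_conj lam_ge0); ring.
by rewrite -invfM -expr2 sqrtCK mulVf // gt_eqF.
Qed.

Section NullMeasurement.
Variables (N K : nat) (z : 'I_K -> C).
Hypothesis z_unit : \sum_s (z s)^* * z s = 1.

(* the kernel of the projection [1 (x) |z><z|] *)
Definition null_effect : 'I_(N * K) -> 'I_(N * K) -> C :=
  tenskernel (fun i j => (i == j)%:R) (fun s t => (z s)^* * z t).

Lemma gram_null_effect : gram null_effect.
Proof. by apply: gram_tenskernel; [exact: gram_delta | exact: gram_rank1]. Qed.

Lemma gram_null_effect_compl : gram (fun e f => (e == f)%:R - null_effect e f).
Proof.
have := gram_tenskernel (gram_delta 'I_N) (gram_delta_subr_rank1 z_unit).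
by apply: eq_gram => e f; rewrite -tenskernel_delta /tenskernel mulrBr.
Qed.

Lemma null_effect_diag i s : z s != 0 ->
  null_effect (mxtens_index (i, s)) (mxtens_index (i, s)) != 0.
Proof.
by move=> zs; rewrite /null_effect /tenskernel mxtens_indexK eqxx mul1r mulf_neq0 ?conjC_eq0.
Qed.

Lemma measure_prepare_null_effect (sigma tau rho : 'M[C]_N) (om : 'M[C]_K) :
  \tr rho = 1 -> \tr om = 1 -> sesq om z z = 0 ->
  measure_prepare null_effect sigma tau (rho *t om) = sigma.
Proof.
move=> trrho trom omz.
rewrite /measure_prepare mxtrace_tens pairing_tenskernel pairing1r.
by rewrite [pairing om _]omz trrho trom mulr0 subr0 mulr1 scale1r scale0r addr0.
Qed.

End NullMeasurement.

Lemma unit_vector_neq0 n (v : 'I_n -> C) : \sum_s (v s)^* * v s = 1 -> exists s, v s != 0.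
Proof.
move=> v_unit; apply/existsP; apply: contraLR (oner_neq0 C) => /existsPn v0.
by rewrite negbK -v_unit big1 // => s _; rewrite (eqP (negPn (v0 s))) mulr0.
Qed.

Lemma not_third_law_null_vector k r (E : 'M[C]_k -> 'M[C]_r) :
  channel E -> ~ third_law E ->
  exists2 rho0, is_fullrank_state rho0 &
    exists2 v : 'I_r -> C, \sum_s (v s)^* * v s = 1 & sesq (E rho0) v v = 0.
Proof.
move=> chE ntlE.
have [rho0 [fr0 nfr0]] : exists rho0, is_fullrank_state rho0 /\ ~ is_fullrank_state (E rho0).
  by apply: NNPP => none; apply: ntlE => rho fr; apply: NNPP => nfr; apply: none; exists rho.
exists rho0 => //; have sErho0 := channel_state chE fr0.1.
by apply: psdmx_not_pdmx_null sErho0.1 _ => pd; apply: nfr0.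
Qed.

Theorem third_law_catalysis N k r (E : 'M[C]_k -> 'M[C]_r) : (0 < N)%N ->
  channel E -> ~ third_law E ->
  forall sigma : 'M[C]_N, is_state sigma ->
  exists (D : nat) (Phi1 : 'M[C]_N -> 'M[C]_(N * powdim k D))
         (Phi2 : 'M[C]_(N * powdim r D) -> 'M[C]_N),
    [/\ channel Phi1, third_law Phi1, channel Phi2, third_law Phi2 &
        forall rho : 'M[C]_N, is_state rho ->
          Phi2 (tensmap (@id 'M[C]_N) (chanpow E D) (Phi1 rho)) = sigma].
Proof.
move=> N_gt0 chE ntlE sigma ssigma.
have [rho0 fr0 [v v_unit v_null]] := not_third_law_null_vector chE ntlE.
have [s0 vs0] := unit_vector_neq0 v_unit.
pose z (g : 'I_(1 * r)) := v (mxtens_unindex g).2.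
have z_unit : \sum_g (z g)^* * z g = 1.
  by rewrite sum_mxtens_index big_ord1 -v_unit; apply: eq_bigr => s _; rewrite /z mxtens_indexK.
have fr1 : is_fullrank_state (1%:M : 'M[C]_1).
  by have := @fullrank_state_maxmixed 1 isT; rewrite invr1.
have frtau := fullrank_state_maxmixed N_gt0.
pose V := null_effect (N := N) z.
have gramV := gram_null_effect N z; have gramV' := gram_null_effect_compl N z_unit.
exists 1%N, (attach_state (1%:M *t rho0)), (measure_prepare V sigma (N%:R^-1)%:M).
split.
- exact/channel_attach_state/(fullrank_state_tens fr1 fr0).1.
- exact/third_law_attach_state/fullrank_state_tens.
- exact: channel_measure_prepare frtau.1.
- pose u0 : 'I_(N * (1 * r)) := mxtens_index (Ordinal N_gt0, mxtens_index (ord0, s0)).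
  have Vu0 : V u0 u0 != 0 by apply: null_effect_diag; rewrite /z mxtens_indexK.
  exact: third_law_measure_prepare Vu0 ssigma frtau.
move=> rho [_ trrho].
change (measure_prepare V sigma (N%:R^-1)%:M
  (tensmap (@id 'M[C]_N) (tensmap (@id 'M[C]_1) E) (rho *t (1%:M *t rho0))) = sigma).
have linE : linmap E by case: chE.
rewrite !tensmap_id_tens //; last exact: linmap_tensmap.
apply: measure_prepare_null_effect => //.
- by rewrite mxtrace_tens mxtrace1 (channel_state chE fr0.1).2 mulr1.
by rewrite sesq_tens1 -v_null; apply: eq_sesq => s; rewrite /slice /z mxtens_indexK.
Qed.

Lemma third_law_composition_third_law m n (Phi : 'M[C]_m -> 'M[C]_n) :
  third_law_composition Phi -> third_law Phi.
Proof. by elim=> {m n Phi} [|m p n Psi Phi _ IH _ tlPhi] //= rho /IH/tlPhi. Qed.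

Lemma pdmx_rank n (A : 'M[C]_n) : pdmx A -> \rank A = n.
Proof.
move=> pdA; apply/eqP; rewrite eqn_leq rank_leq_col -subn_eq0 -mxrank_ker mxrank_eq0.
apply/eqP/matrixP => i j; rewrite mxE; apply/eqP/contraT => kerij.
pose u := row i (kermx A).
have uA : u *m A = 0 by rewrite /u -row_mul mulmx_ker row0.
have adj_u : adjmx u != 0.
  apply: contra kerij => /eqP/matrixP/(_ j 0).
  by rewrite !mxE => /eqP; rewrite conjC_eq0.
have := pdA _ adj_u.
suff -> : adjmx (adjmx u) = u by rewrite uA mul0mx mxE ltxx.
by apply/matrixP => a b; rewrite !mxE conjCK.
Qed.

Theorem third_law_composition_no_reset N (Psi : 'M[C]_N -> 'M[C]_N) : (1 < N)%N ->
  third_law_composition Psi ->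
  (forall rho : 'M[C]_N, is_fullrank_state rho -> is_fullrank_state (Psi rho))
  /\ ~ (exists tau : 'M[C]_N,
          is_pure_state tau /\ forall rho : 'M[C]_N, is_state rho -> Psi rho = tau).
Proof.
move=> N_gt1 /third_law_composition_third_law tlPsi; split=> // -[tau [[_ rk1] reset]].
have frmix := fullrank_state_maxmixed (ltnW N_gt1).
have [_ /pdmx_rank] := tlPsi _ frmix; rewrite reset ?rk1 => [N1|]; last exact: frmix.1.
by rewrite -N1 in N_gt1.
Qed.

End ThirdLaw.

Theorem mainTheorem10 (R : realType) (N : nat) (hN : (2 <= N)%N) :
  (* (a) *)
  (forall (k r : nat) (E : 'M[R[i]]_k -> 'M[R[i]]_r),
      channel E -> ~ third_law E ->
      forall sigma : 'M[R[i]]_N, is_state sigma ->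
      exists (D : nat) (Phi1 : 'M[R[i]]_N -> 'M[R[i]]_(N * powdim k D))
             (Phi2 : 'M[R[i]]_(N * powdim r D) -> 'M[R[i]]_N),
        [/\ channel Phi1, third_law Phi1, channel Phi2, third_law Phi2 &
            forall rho : 'M[R[i]]_N, is_state rho ->
              Phi2 (tensmap (@id 'M[R[i]]_N) (chanpow E D) (Phi1 rho)) = sigma])
  /\
  (* (b) *)
  (forall Psi : 'M[R[i]]_N -> 'M[R[i]]_N,
      third_law_composition Psi ->
      (forall rho : 'M[R[i]]_N, is_fullrank_state rho -> is_fullrank_state (Psi rho))
      /\ ~ (exists tau : 'M[R[i]]_N,
              is_pure_state tau /\ forall rho : 'M[R[i]]_N, is_state rho -> Psi rho = tau)).
Proof.
split=> [k r E | Psi]; first exact: third_law_catalysis (ltnW hN).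
exact: third_law_composition_no_reset.
Qed.
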